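(* In the linear deterministic diamond network with a disturbing node with gains $n_1,n_2,n_3,n_4,m$, suppose $n_1>n_2$, $n_4\ge n_3$ and $m\le n_2$. Then the linear capacity is $C=\min(n_1,\ n_4,\ n_2+n_3-m)$.
   Context: The shift matrix $Q$ is the $q\times q$ matrix over $\mathbb{F}_2$ with $Q_{i+1,i}=1$ for $1\le i\le q-1$ and all other entries $0$, where $q=\max(n_1,n_2,n_3,n_4,m)$ and all gains are nonnegative integers. Network: source $S$, relays $A,B$, destination $D$, disturbing node $M$; gains $n_1$ ($S\to A$), $n_2$ ($S\to B$), $n_3$ ($A\to D$), $n_4$ ($B\to D$), $m$ ($M\to A$ and $M\to B$). Each node transmits $x_i\in\mathbb{F}_2^q$ and receives $y_j=\sum_{k:(k,j)\text{ an edge}}Q^{q-n_{(k,j)}}x_k$; relays use linear maps $x_A=G_Ay_A$, $x_B=G_By_B$ with $G_A,G_B$ arbitrary $q\times q$ matrices over $\mathbb{F}_2$. Then $y_D=G_Sx_S+G_Mx_M$ with $G_S=Q^{q-n_3}G_AQ^{q-n_1}+Q^{q-n_4}G_BQ^{q-n_2}$ and $G_M=Q^{q-n_3}G_AQ^{q-m}+Q^{q-n_4}G_BQ^{q-m}$. The rate $R(G_A,G_B)$ is the maximum dimension of a subspace $\mathcal{X}\subseteq\mathbb{F}_2^q$ such that for all $x_S,x_S'\in\mathcal{X}$, $x_M,x_M'\in\mathbb{F}_2^q$, $G_Sx_S+G_Mx_M=G_Sx_S'+G_Mx_M'$ implies $x_S=x_S'$. The linear capacity is $C=\max_{G_A,G_B}R(G_A,G_B)$.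 *)

From HB Require Import structures.
From mathcomp Require Import all_boot all_order all_algebra.
Set Implicit Arguments. Unset Strict Implicit. Unset Printing Implicit Defensive.
Import GRing.Theory.
Local Open Scope ring_scope.

Notation F2 := 'F_2.

Definition shiftQ (q : nat) : 'M[F2]_q :=
  \matrix_(i < q, j < q) (if (i : nat) == (j : nat).+1 then 1 else 0).

(* Q^k as an iterated matrix product (avoids needing a ring on 'M_0). *)
Definition Qpow (q k : nat) : 'M[F2]_q := iter k (mulmx (shiftQ q)) 1%:M.

Definition qdim (n1 n2 n3 n4 m : nat) : nat :=
  maxn n1 (maxn n2 (maxn n3 (maxn n4 m))).

Definition GS (q n1 n2 n3 n4 : nat) (GA GB : 'M[F2]_q) : 'M[F2]_q :=
  Qpow q (q - n3) *m GA *m Qpow q (q - n1) + Qpow q (q - n4) *m GB *m Qpow q (q - n2).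
Definition GM (q n3 n4 m : nat) (GA GB : 'M[F2]_q) : 'M[F2]_q :=
  Qpow q (q - n3) *m GA *m Qpow q (q - m) + Qpow q (q - n4) *m GB *m Qpow q (q - m).

Definition decodable (q n1 n2 n3 n4 m : nat) (GA GB : 'M[F2]_q)
    (X : {vspace 'cV[F2]_q}) : Prop :=
  forall xS xS' xM xM' : 'cV[F2]_q, xS \in X -> xS' \in X ->
    GS n1 n2 n3 n4 GA GB *m xS + GM n3 n4 m GA GB *m xM =
    GS n1 n2 n3 n4 GA GB *m xS' + GM n3 n4 m GA GB *m xM' -> xS = xS'.

Definition is_rate (q n1 n2 n3 n4 m : nat) (GA GB : 'M[F2]_q) (r : nat) : Prop :=
  (exists X, decodable n1 n2 n3 n4 m GA GB X /\ \dim X = r) /\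
  (forall X, decodable n1 n2 n3 n4 m GA GB X -> (\dim X <= r)%N).

Definition is_linear_capacity (n1 n2 n3 n4 m c : nat) : Prop :=
  let q := qdim n1 n2 n3 n4 m in
  (exists GA GB : 'M[F2]_q, is_rate n1 n2 n3 n4 m GA GB c) /\
  (forall (GA GB : 'M[F2]_q) (r : nat), is_rate n1 n2 n3 n4 m GA GB r -> (r <= c)%N).

(** Upper bound: a decodable subspace injects into each of three cuts, namely
    the [n1] source levels heard by the relays, the [n4] levels of [D] reached
    by the relays, and, against the disturbance that replays the source vector
    shifted by [n2 - m] levels so as to cancel all but the top [n2 - m] source
    levels at [B], these top levels together with the [n3] levels [A] delivers.
    Achievability: [A] forwards its bottom [n3] levels; [B] forwards the top
    [kB] source levels, which it hears undisturbed, onto levels of [D] that [A]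
    cannot reach, and copies what it hears onto the [n3] levels [D] shares with
    [A].  There both relays forward the same disturbance, which cancels over
    [F_2], and the source is recovered by back-substitution. *)

From mathcomp Require Import all_boot all_order all_algebra.
From mathcomp Require Import zify.
Set Implicit Arguments. Unset Strict Implicit. Unset Printing Implicit Defensive.
Import GRing.Theory.
Local Open Scope ring_scope.

Section ColumnEntries.
Variable R : nzRingType.

(* Entries are indexed by [nat], with the junk value [0] beyond the length. *)
Definition nth_cv q (v : 'cV[R]_q) (n : nat) : R :=
  if @insub nat (fun k => k < q)%N _ n is Some i then v i 0 else 0.

Lemma nth_cvE q (v : 'cV[R]_q) (i : 'I_q) : nth_cv v i = v i 0.
Proof. by rewrite /nth_cv valK. Qed.

Lemma nth_cv_out q (v : 'cV[R]_q) n : (q <= n)%N -> nth_cv v n = 0.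
Proof. by move=> qn; rewrite /nth_cv insubN // -leqNgt. Qed.

Lemma eq_nth_cv q (v w : 'cV[R]_q) :
  (forall n, (n < q)%N -> nth_cv v n = nth_cv w n) -> v = w.
Proof. by move=> eq_vw; apply/matrixP => i j; rewrite (ord1 j) -!nth_cvE eq_vw. Qed.


Lemma nth_cv0 q n : nth_cv (0 : 'cV[R]_q) n = 0.
Proof.
case: (ltnP n q) => [lt_nq | ?]; last exact: nth_cv_out.
by rewrite -[n]/(val (Ordinal lt_nq)) nth_cvE mxE.
Qed.

Lemma nth_cvD q (v w : 'cV[R]_q) n : nth_cv (v + w) n = nth_cv v n + nth_cv w n.
Proof.
case: (ltnP n q) => [lt_nq | ?]; last by rewrite !nth_cv_out ?addr0.
by rewrite -[n]/(val (Ordinal lt_nq)) !nth_cvE mxE.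
Qed.

Lemma nth_cvB q (v w : 'cV[R]_q) n : nth_cv (v - w) n = nth_cv v n - nth_cv w n.
Proof.
case: (ltnP n q) => [lt_nq | ?]; last by rewrite !nth_cv_out ?subr0.
by rewrite -[n]/(val (Ordinal lt_nq)) !nth_cvE !mxE.
Qed.

(* Row [i] of [selmx p q g] selects the entry [g i] (no entry if [q <= g i]). *)
Definition selmx p q (g : nat -> nat) : 'M[R]_(p, q) :=
  \matrix_(i, j) ((j : nat) == g i)%:R.

Lemma nth_cv_selmx p q g (v : 'cV[R]_q) n :
  nth_cv (selmx p q g *m v) n = if (n < p)%N then nth_cv v (g n) else 0.
Proof.
case: (ltnP n p) => [lt_np | ?]; last exact: nth_cv_out.
rewrite -[n]/(val (Ordinal lt_np)) nth_cvE mxE /=.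
case: (ltnP (g n) q) => [lt_gq | le_qg].
  rewrite (bigD1 (Ordinal lt_gq)) //= mxE eqxx mul1r big1 ?addr0.
    by rewrite -[g n]/(val (Ordinal lt_gq)) nth_cvE.
  move=> j ne_j; rewrite mxE; case: eqP => [eq_j | _]; last by rewrite mul0r.
  by case/eqP: ne_j; apply: val_inj.
rewrite nth_cv_out // big1 // => j _; rewrite mxE.
case: eqP => [eq_j | _]; last by rewrite mul0r.
by have := ltn_ord j; rewrite eq_j ltnNge le_qg.
Qed.

Lemma selmx_mul_eq0 p q g (v : 'cV[R]_q) i :
  selmx p q g *m v = 0 -> (i < p)%N -> nth_cv v (g i) = 0.
Proof. by move=> Hv lt_ip; have := nth_cv_selmx p g v i; rewrite Hv nth_cv0 lt_ip. Qed.

End ColumnEntries.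

Arguments selmx {R} p q g.

Lemma shiftQ_selmx q : shiftQ q = selmx q q (fun i => if i is i'.+1 then i' else q).
Proof.
apply/matrixP => i j; rewrite !mxE; case: (nat_of_ord i) => [|i'] /=.
  by rewrite (ltn_eqF (ltn_ord j)).
by rewrite eqSS eq_sym; case: eqP.
Qed.

Lemma nth_cv_Qpow q k (v : 'cV[F2]_q) n :
  nth_cv (Qpow q k *m v) n = if (k <= n < q)%N then nth_cv v (n - k) else 0.
Proof.
elim: k n => [|k IHk] n.
  by rewrite /Qpow /= mul1mx subn0; case: ltnP => // ?; rewrite nth_cv_out.
rewrite /Qpow /= -mulmxA -/(Qpow q k) shiftQ_selmx nth_cv_selmx.
case: ltnP => [lt_nq | _]; last by rewrite andbF.
case: n lt_nq => [|n] lt_nq /=; first by rewrite IHk ltnn andbF.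
by rewrite IHk subSS andbT ltnS (ltnW lt_nq) andbT.
Qed.

Lemma Qpow_mul_eq0 q k (v : 'cV[F2]_q) : (k <= q)%N ->
  (forall i, (i < k)%N -> nth_cv v i = 0) -> Qpow q (q - k) *m v = 0.
Proof.
move=> le_kq v0; apply: eq_nth_cv => n lt_nq.
by rewrite nth_cv0 nth_cv_Qpow; case: ifP => // ?; apply: v0; lia.
Qed.

Lemma addrr_F2 (a : F2) : a + a = 0.
Proof. exact: addrr_pchar2 (pchar_Fp (isT : prime 2)) a. Qed.

Lemma GM_GS q n3 n4 m (GA GB : 'M[F2]_q) : GM n3 n4 m GA GB = GS m m n3 n4 GA GB.
Proof. by []. Qed.

Lemma GS_GM_mulmx q n1 n2 n3 n4 m (GA GB : 'M[F2]_q) (xS xM : 'cV[F2]_q) :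
  GS n1 n2 n3 n4 GA GB *m xS + GM n3 n4 m GA GB *m xM =
  Qpow q (q - n3) *m (GA *m (Qpow q (q - n1) *m xS + Qpow q (q - m) *m xM)) +
  Qpow q (q - n4) *m (GB *m (Qpow q (q - n2) *m xS + Qpow q (q - m) *m xM)).
Proof. by rewrite !mulmxDr !mulmxDl !mulmxA addrACA. Qed.

Section DestinationLevels.
Variables (q n1 n2 n3 n4 : nat) (GA GB : 'M[F2]_q) (x : 'cV[F2]_q).

Local Notation xA := (GA *m (Qpow q (q - n1) *m x)).
Local Notation xB := (GB *m (Qpow q (q - n2) *m x)).

Lemma GS_mulmx : GS n1 n2 n3 n4 GA GB *m x = Qpow q (q - n3) *m xA + Qpow q (q - n4) *m xB.
Proof. by rewrite mulmxDl !mulmxA. Qed.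

Lemma nth_cv_GS_unreached n : (n3 <= n4)%N -> (n < q - n4)%N ->
  nth_cv (GS n1 n2 n3 n4 GA GB *m x) n = 0.
Proof.
move=> le_n3n4 lt_n; rewrite GS_mulmx; move: xA xB => u w.
by rewrite nth_cvD !nth_cv_Qpow !ifF ?addr0 //; lia.
Qed.

Lemma nth_cv_GS_onlyB n : (q - n4 <= n < q - n3)%N ->
  nth_cv (GS n1 n2 n3 n4 GA GB *m x) n = nth_cv xB (n - (q - n4)).
Proof.
move=> onlyB_n; rewrite GS_mulmx; move: xA xB => u w.
by rewrite nth_cvD !nth_cv_Qpow ifF ?ifT ?add0r //; lia.
Qed.

Lemma nth_cv_GS_both n : (n3 <= n4)%N -> (q - n3 <= n < q)%N ->
  nth_cv (GS n1 n2 n3 n4 GA GB *m x) n = nth_cv xA (n - (q - n3)) + nth_cv xB (n - (q - n4)).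
Proof.
move=> le_n3n4 both_n; rewrite GS_mulmx; move: xA xB => u w.
by rewrite nth_cvD !nth_cv_Qpow !ifT //; lia.
Qed.

End DestinationLevels.

Lemma dimv_leq_injmx (K : fieldType) k q (H : 'M[K]_(k, q)) (X : {vspace 'cV[K]_q}) :
  (forall x, x \in X -> H *m x = 0 -> x = 0) -> (\dim X <= k)%N.
Proof.
move=> injH; pose f := linfun (mulmx H : 'cV_q -> 'cV_k).
have ker_f : (X :&: lker f)%VS = 0%VS.
  apply/eqP; rewrite -subv0; apply/subvP => x.
  rewrite memv_cap memv_ker memv0 lfunE /= => /andP[xX /eqP Hx0].
  by rewrite (injH x).
rewrite -(limg_dim_eq ker_f).
have := dimvS (subvf (f @: X)); rewrite dimvf dim_matrix.
by move/leq_trans; apply; rewrite mulr1.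
Qed.

Lemma dim_limg_mulmx (K : fieldType) q c (E : 'M[K]_(q, c)) :
  (forall y : 'cV_c, E *m y = 0 -> y = 0) ->
  \dim (limg (linfun (mulmx E : 'cV_c -> 'cV_q))) = c.
Proof.
move=> injE; rewrite limg_dim_eq; first by rewrite dimvf dim_matrix mulr1.
apply/eqP; rewrite -subv0; apply/subvP => y.
by rewrite memv_cap memv_ker memv0 lfunE /= => /andP[_ /eqP/injE ->].
Qed.

Definition cut_bound n1 n2 n3 n4 m := minn n1 (minn n4 (n2 + n3 - m)).

Section UpperBound.
Variables (q n1 n2 n3 n4 m : nat) (GA GB : 'M[F2]_q) (X : {vspace 'cV[F2]_q}).
Hypotheses (le_n1q : (n1 <= q)%N) (lt_n2n1 : (n2 < n1)%N) (le_n3n4 : (n3 <= n4)%N)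
  (le_n4q : (n4 <= q)%N) (le_mn2 : (m <= n2)%N).
Hypothesis decX : decodable n1 n2 n3 n4 m GA GB X.

Local Notation GSAB := (GS n1 n2 n3 n4 GA GB).
Local Notation GMAB := (GM n3 n4 m GA GB).

Lemma decodable_eq0 x xM : x \in X -> GSAB *m x + GMAB *m xM = 0 -> x = 0.
Proof.
by move=> Xx Hx; apply: (decX (xM := xM) (xM' := 0) Xx (mem0v X)); rewrite Hx !mulmx0 addr0.
Qed.

Lemma decodable_dim_leq_n1 : (\dim X <= n1)%N.
Proof.
apply: (dimv_leq_injmx (H := selmx n1 q id)) => x Xx top0.
apply: (decodable_eq0 (xM := 0) Xx); rewrite mulmx0 addr0.
have Qx0 k : (k <= n1)%N -> Qpow q (q - k) *m x = 0.
  move=> le_kn1; apply: Qpow_mul_eq0 => [|i lt_ik]; first lia.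
  by apply: (selmx_mul_eq0 top0); lia.
by rewrite GS_mulmx !Qx0 ?mulmx0 ?addr0 //; lia.
Qed.

Lemma decodable_dim_leq_n4 : (\dim X <= n4)%N.
Proof.
apply: (dimv_leq_injmx (H := selmx n4 q (addn^~ (q - n4)%N) *m GSAB)) => x Xx.
rewrite -mulmxA => bottom0; apply: (decodable_eq0 (xM := 0) Xx).
rewrite mulmx0 addr0; apply: eq_nth_cv => n lt_nq; rewrite nth_cv0.
case: (leqP (q - n4) n) => [le_n | lt_n].
  by rewrite -(subnK le_n); apply: (selmx_mul_eq0 bottom0); lia.
exact: nth_cv_GS_unreached.
Qed.

Lemma decodable_dim_leq_n2_m_n3 : (\dim X <= n2 - m + n3)%N.
Proof.
pose xM_of : 'M[F2]_q := selmx q q (addn^~ (n2 - m)%N).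
pose yA_of := Qpow q (q - n1) + Qpow q (q - m) *m xM_of.
apply: (dimv_leq_injmx (H := col_mx (selmx (n2 - m)%N q id) (selmx n3 q id *m GA *m yA_of))).
move=> x Xx /eqP; rewrite mul_col_mx col_mx_eq0 => /andP[/eqP top0 /eqP A0].
apply: (decodable_eq0 (xM := xM_of *m x) Xx).
(* On its bottom [m] levels, [B] hears the disturbance [xM_of *m x] exactly
   as it hears [x]. *)
have B_silent : Qpow q (q - n2) *m x + Qpow q (q - m) *m (xM_of *m x) = 0.
  apply: eq_nth_cv => n lt_nq; rewrite nth_cv0 nth_cvD !nth_cv_Qpow nth_cv_selmx.
  case: (leqP (q - m) n) => [le_n | lt_n].
    rewrite lt_nq !ifT; try lia.
    by rewrite (_ : n - (q - m) + (n2 - m) = n - (q - n2))%N ?addrr_F2 //; lia.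
  rewrite addr0; case: ifP => // le_n2.
  by apply: (selmx_mul_eq0 top0); lia.
have A_silent :
    Qpow q (q - n3) *m (GA *m (Qpow q (q - n1) *m x + Qpow q (q - m) *m (xM_of *m x))) = 0.
  apply: Qpow_mul_eq0 => [|i lt_in3]; first lia.
  apply: (selmx_mul_eq0 (g := id) _ lt_in3).
  by rewrite !mulmxA -mulmxDl mulmxA.
by rewrite GS_GM_mulmx B_silent !mulmx0 addr0.
Qed.

Lemma decodable_dim_leq_cut_bound : (\dim X <= cut_bound n1 n2 n3 n4 m)%N.
Proof.
rewrite /cut_bound; have := decodable_dim_leq_n1; have := decodable_dim_leq_n4.
have := decodable_dim_leq_n2_m_n3; lia.
Qed.

End UpperBound.

Section Achievability.
Variables (q n1 n2 n3 n4 m : nat).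
Hypotheses (le_n1q : (n1 <= q)%N) (lt_n2n1 : (n2 < n1)%N) (le_n3n4 : (n3 <= n4)%N)
  (le_n4q : (n4 <= q)%N) (le_mn2 : (m <= n2)%N).

(* The top [kB] source levels travel [S -> B -> D]: they must lie above the
   disturbance at [B], avoid the bottom [n3] source levels sent through [A],
   and land on levels of [D] that [A] does not reach. *)
Definition kB := minn (n2 - m) (minn (n1 - n3) (n4 - n3)).

Lemma kB_bounds : [/\ kB <= n2 - m, kB <= n1 - n3 & kB <= n4 - n3]%N.
Proof. by rewrite /kB; split; lia. Qed.

Definition relayB_input i :=
  if (i < kB)%N then (i + (q - n2))%N
  else if (n4 - n3 <= i)%N then (i + (q - n4))%N else q.

Definition relayA : 'M[F2]_q := selmx q q (addn^~ (q - n3)%N).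
Definition relayB : 'M[F2]_q := selmx q q relayB_input.

Local Notation GSr := (GS n1 n2 n3 n4 relayA relayB).

Lemma GM_relay_eq0 (x : 'cV[F2]_q) : GM n3 n4 m relayA relayB *m x = 0.
Proof.
apply: eq_nth_cv => n lt_nq; rewrite nth_cv0 GM_GS.
case: (ltnP n (q - n4)) => [lt_n4 | le_n4]; first exact: nth_cv_GS_unreached.
case: (ltnP n (q - n3)) => [lt_n3 | le_n3].
  rewrite nth_cv_GS_onlyB; last lia.
  rewrite nth_cv_selmx /relayB_input; case: ifP => // _.
  case: ifP => [lt_kB | _]; last by rewrite ifF ?nth_cv_out //; lia.
  by case: kB_bounds => *; rewrite nth_cv_Qpow ifF //; lia.
rewrite nth_cv_GS_both //; last lia.
rewrite !nth_cv_selmx !ifT; try lia.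
case: kB_bounds => *; rewrite /relayB_input ifF ?ifT; try lia.
by rewrite !subnK ?addrr_F2 //; lia.
Qed.

Lemma nth_GS_relay_top (x : 'cV[F2]_q) k :
  (k < kB)%N -> nth_cv (GSr *m x) (q - n4 + k) = nth_cv x k.
Proof.
move=> lt_kB; case: kB_bounds => *.
rewrite nth_cv_GS_onlyB; last lia.
rewrite nth_cv_selmx ifT; last lia.
rewrite addKn /relayB_input lt_kB nth_cv_Qpow ifT; last lia.
by rewrite addnK.
Qed.

Lemma nth_GS_relay_shared (x : 'cV[F2]_q) i : (n1 - n3 <= i < n1)%N ->
  nth_cv (GSr *m x) (i + (q - n1)) = nth_cv x i + nth_cv (Qpow q (n1 - n2) *m x) i.
Proof.
move=> shared_i; case: kB_bounds => *; rewrite nth_cv_GS_both //; last lia.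
rewrite !nth_cv_selmx !ifT; try lia.
rewrite /relayB_input ifF; last lia.
rewrite ifT; last lia.
rewrite !subnK; try lia.
rewrite !nth_cv_Qpow ifT; last lia.
rewrite addnK (_ : (q - n2 <= i + (q - n1) < q)%N = (n1 - n2 <= i < q)%N); last lia.
by case: ifP => // _; congr (_ + nth_cv x _); lia.
Qed.

Definition msg_level i := (i < kB)%N || (n1 - n3 <= i < n1)%N.

(* Back-substitution: the shared levels only involve lower source levels. *)
Lemma GS_relay_inj (x : 'cV[F2]_q) :
  (forall i, ~~ msg_level i -> nth_cv x i = 0) -> GSr *m x = 0 -> x = 0.
Proof.
move=> x_supp GSx0; apply: eq_nth_cv => n _; rewrite nth_cv0; move: n.
elim/ltn_ind => i IHi.
have [/orP[lt_kB | shared] | /x_supp //] := boolP (msg_level i).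
  by rewrite -nth_GS_relay_top // GSx0 nth_cv0.
have := nth_GS_relay_shared x shared; rewrite GSx0 nth_cv0 nth_cv_Qpow.
case: ifP => [le_i2 | _]; last by rewrite addr0.
rewrite (IHi (i - (n1 - n2))%N) ?addr0; first by move->.
lia.
Qed.

Local Notation c := (cut_bound n1 n2 n3 n4 m).

Definition msg_index i := if (i < kB)%N then i else (i - (n1 - n3) + kB)%N.

Definition msg_pos l := if (l < kB)%N then l else (l - kB + (n1 - n3))%N.

Lemma msg_posK l : (l < c)%N ->
  [/\ msg_pos l < q, msg_level (msg_pos l) & msg_index (msg_pos l) = l]%N.
Proof.
rewrite /cut_bound /msg_level /msg_index /msg_pos => lt_l.
have kB_def : kB = minn (n2 - m) (minn (n1 - n3) (n4 - n3)) by [].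
case: (ltnP l kB) => [lt_lk | le_lk] /=.
  by split; rewrite ?lt_lk //; lia.
have -> /= : (l - kB + (n1 - n3) < kB)%N = false by lia.
by split; lia.
Qed.

Definition msg_emb : 'M[F2]_(q, c) :=
  selmx q c (fun i => if msg_level i then msg_index i else c).

Definition msg_space := limg (linfun (mulmx msg_emb : 'cV_c -> 'cV_q)).

Lemma msg_emb_inj (y : 'cV[F2]_c) : msg_emb *m y = 0 -> y = 0.
Proof.
move=> y0; apply: eq_nth_cv => l /msg_posK[lt_pq msg_p msg_pK].
have := congr1 (fun v : 'cV[F2]_q => nth_cv v (msg_pos l)) y0.
by rewrite /msg_emb nth_cv_selmx !nth_cv0 lt_pq msg_p msg_pK => ->.
Qed.

Lemma msg_space_dim : \dim msg_space = c.
Proof. exact: dim_limg_mulmx msg_emb_inj. Qed.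

Lemma msg_space_supp x i : x \in msg_space -> ~~ msg_level i -> nth_cv x i = 0.
Proof.
case/memv_imgP => y _ -> /negbTE not_msg.
by rewrite lfunE /= nth_cv_selmx not_msg; case: ifP => // _; rewrite nth_cv_out.
Qed.

Lemma msg_space_decodable : decodable n1 n2 n3 n4 m relayA relayB msg_space.
Proof.
move=> xS xS' xM xM' xS_msg xS'_msg.
rewrite [X in _ + X = _]GM_relay_eq0 [X in _ = _ + X]GM_relay_eq0 !addr0 => GS_eq.
apply/eqP; rewrite -subr_eq0; apply/eqP/GS_relay_inj => [i not_msg|].
  by rewrite nth_cvB !msg_space_supp ?subr0.
by rewrite mulmxBr GS_eq subrr.
Qed.

Lemma relay_rate : is_rate n1 n2 n3 n4 m relayA relayB c.
Proof.
split; first by exists msg_space; split; [exact: msg_space_decodable | exact: msg_space_dim].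
by move=> X decX; apply: (decodable_dim_leq_cut_bound le_n1q lt_n2n1 le_n3n4 le_n4q le_mn2 decX).
Qed.

End Achievability.

Local Close Scope ring_scope.

Theorem mainTheorem6 (n1 n2 n3 n4 m : nat) :
  (n2 < n1)%N -> (n3 <= n4)%N -> (m <= n2)%N ->
  is_linear_capacity n1 n2 n3 n4 m (minn n1 (minn n4 (n2 + n3 - m))).
Proof.
move=> lt_n2n1 le_n3n4 le_mn2.
have le_n1q : (n1 <= qdim n1 n2 n3 n4 m)%N by rewrite /qdim; lia.
have le_n4q : (n4 <= qdim n1 n2 n3 n4 m)%N by rewrite /qdim; lia.
split.
  by exists (relayA _ n3), (relayB _ n1 n2 n3 n4 m); apply: relay_rate.
move=> GA GB r [[X [decX <-]] _].
exact: decodable_dim_leq_cut_bound le_n1q lt_n2n1 le_n3n4 le_n4q le_mn2 decX.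
Qed.
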